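(* Let $\mathbf p$ be a non-degenerate configuration of $n$ points in $\mathbb R^d$ (not necessarily pinned) with affine span of dimension $\ell$, and let $\mathbf p(t)$ be an analytic trajectory with $\mathbf p(0)=\mathbf p$. Then there exist $\varepsilon>0$ and an analytic trajectory of isometries $T(t)$, $t\in[0,\varepsilon)$, such that $\mathbf q(t):=T(t)\mathbf p(t)$ is in $\ell$-pinned position for all $t\in[0,\varepsilon)$.
   Context: A configuration $\mathbf q=(\mathbf q_1,\dots,\mathbf q_n)$, $\mathbf q_i\in\mathbb R^d$, is in $\ell$-pinned position if $\mathbf q_1=0$ and, for $2\le i\le\ell+1$, $\mathbf q_i$ lies in the span of $e_1,\dots,e_{i-1}$. A configuration $\mathbf p$ with $\ell$-dimensional affine span is non-degenerate if $\mathbf p_1,\dots,\mathbf p_{\ell+1}$ are affinely independent. An analytic trajectory of isometries is a family $T(t)\mathbf x=A(t)\mathbf x+\mathbf b(t)$ of isometries of $\mathbb R^d$ with $A(t)$ orthogonal and $A(t),\mathbf b(t)$ analytic in $t$; it acts on configurations pointwise. *)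

From HB Require Import structures.
From mathcomp Require Import all_boot all_order all_algebra.
From mathcomp Require Import all_classical all_reals all_analysis.
Set Implicit Arguments. Unset Strict Implicit. Unset Printing Implicit Defensive.
Import Order.TTheory GRing.Theory Num.Theory.
Import numFieldNormedType.Exports.
Local Open Scope classical_set_scope.
Local Open Scope ring_scope.

(* A configuration of n points in R^d: point i is the row vector p i.
   Indices are 0-based: the paper's p_1, ..., p_n are p 0, ..., p (n-1). *)
Definition config (R : realType) (n d : nat) := 'I_n -> 'rV[R]_d.

Definition pt (R : realType) n d (p : config R n d) (k : nat) : 'rV[R]_d :=
  if insub k is Some i then p i else 0.

Definition affine_dim (R : realType) n d (p : config R n d) : nat :=
  \rank (\matrix_(i < n) (p i - pt p 0)).

Definition first_aff_indep (R : realType) n d (p : config R n d) (m : nat) : Prop :=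
  (m < n)%N /\ \rank (\matrix_(i < m) (pt p i.+1 - pt p 0)) = m.

Definition nondegenerate_config (R : realType) n d (p : config R n d) : Prop :=
  first_aff_indep p (affine_dim p).

(* l-pinned position (0-based): q_0 = 0 and, for 1 <= i <= l, q_i lies in
   span(e_0, ..., e_(i-1)), i.e. coordinates j >= i of q_i vanish. *)
Definition pinned (R : realType) n d (l : nat) (q : config R n d) : Prop :=
  forall (i : 'I_n) (j : 'I_d), (i <= l)%N -> (i <= j)%N -> q i 0 j = 0.

Definition analytic_at (R : realType) (f : R -> R) (t0 : R) : Prop :=
  exists r : R, 0 < r /\ exists a : nat -> R,
    forall t, `|t - t0| < r ->
      series (fun k => a k * (t - t0) ^+ k) @ \oo --> f t.

Definition mx_analytic_on (R : realType) m k (M : R -> 'M[R]_(m, k))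
  (D : set R) : Prop :=
  forall t0, D t0 -> forall i j, analytic_at (fun t => M t i j) t0.

Definition traj_analytic_on (R : realType) n d (p : R -> config R n d)
  (D : set R) : Prop :=
  forall i : 'I_n, mx_analytic_on (fun t => p t i) D.

Definition orthogonal_mx (R : realType) d (A : 'M[R]_d) : Prop :=
  A^T *m A = 1%:M.

(* the isometry x |-> A x + b acting on row vectors, pointwise on configurations *)
Definition act_iso (R : realType) n d (A : 'M[R]_d) (b : 'rV[R]_d)
  (p : config R n d) : config R n d :=
  fun i => p i *m A^T + b.

(* The trajectory is pinned by an analytic orthonormal frame built with
   Gram-Schmidt.  At t = 0 the edge vectors p_i(0) - p_0(0), 1 <= i <= l, are
   linearly independent; complete them by constant vectors to a basis of R^d
   and apply Gram-Schmidt to p_i(t) - p_0(t) followed by these constant vectors.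
   The resulting frame is analytic in t as long as no residual vanishes, because
   real-analytic functions are closed under sums, products, inverses and square
   roots: the coefficients of 1/f and of sqrt f are given by the usual
   recursions and are bounded geometrically by a majorant argument, and Cauchy
   products of such series converge to the product.  The residuals do not
   vanish at t = 0, hence for small t by continuity.  Let A(t) have the frame
   as rows and b(t) = -A(t) p_0(t): then p_0 is sent to the origin and, since
   Gram-Schmidt is triangular, p_i - p_0 is orthogonal to the frame vectors of
   index >= i, i.e. it is sent into the span of the first i coordinate axes. *)

From HB Require Import structures.
From mathcomp Require Import all_boot all_order all_algebra.
From mathcomp Require Import all_classical all_reals all_analysis.
From mathcomp.algebra_tactics Require Import ring lra.
Import Order.TTheory GRing.Theory Num.Theory.
Import numFieldNormedType.Exports.
Set Implicit Arguments. Unset Strict Implicit. Unset Printing Implicit Defensive.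
Local Open Scope classical_set_scope.
Local Open Scope ring_scope.

Section StrongRecursion.
Variables (V : Type) (v0 : V) (step : nat -> (nat -> V) -> V).

Fixpoint strong_rec_seq N : seq V :=
  if N is N'.+1 then
    let s := strong_rec_seq N' in rcons s (step N' (nth v0 s))
  else [::].

Definition strong_rec N := nth v0 (strong_rec_seq N.+1) N.

Lemma size_strong_rec_seq N : size (strong_rec_seq N) = N.
Proof. by elim: N => //= N IH; rewrite size_rcons IH. Qed.

Lemma nth_strong_rec_seq N i : (i < N)%N -> nth v0 (strong_rec_seq N) i = strong_rec i.
Proof.
elim: N => // N IH; rewrite ltnS leq_eqVlt => /orP[/eqP->//|iN].
by rewrite /= nth_rcons size_strong_rec_seq iN IH.
Qed.

Hypothesis step_ext : forall N g g',
  (forall i, (i < N)%N -> g i = g' i) -> step N g = step N g'.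

Lemma strong_recE N : strong_rec N = step N strong_rec.
Proof.
rewrite /strong_rec /= nth_rcons size_strong_rec_seq ltnn eqxx.
by apply: step_ext => i iN; rewrite nth_strong_rec_seq.
Qed.

End StrongRecursion.

Section PowerSeries.
Variable R : realType.
Implicit Types (a b : nat -> R) (C D K s x : R).

Definition pseries a s := series (fun k => a k * s ^+ k).

Definition geom_bounded a C K := forall k, `|a k| <= C * K ^+ k.

Definition conv a b N := \sum_(i < N.+1) a i * b (N - i)%N.

Definition trunc M a k := if (k < M)%N then a k else 0.

Lemma geom_bounded_ge0 a C K : geom_bounded a C K -> 0 <= C.
Proof. by move/(_ 0%N); rewrite expr0 mulr1; apply: le_trans. Qed.

Lemma geom_boundedW a C K K' :
  0 <= K -> K <= K' -> geom_bounded a C K -> geom_bounded a C K'.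
Proof.
move=> K0 KK' aC k; apply: (le_trans (aC k)).
apply: ler_wpM2l; first exact: geom_bounded_ge0 aC.
by apply: lerXn2r; rewrite // nnegrE (le_trans K0).
Qed.

Lemma geom_bounded_trunc a C K M :
  0 <= K -> geom_bounded a C K -> geom_bounded (trunc M a) C K.
Proof.
move=> K0 aC k; rewrite /trunc; case: ifP => // _.
by rewrite normr0 mulr_ge0 ?exprn_ge0 // (geom_bounded_ge0 aC).
Qed.

Lemma geom_bounded_scale a C K s :
  geom_bounded a C K -> geom_bounded (fun k => a k * s ^+ k) C (K * `|s|).
Proof.
move=> aC k; rewrite normrM normrX exprMn mulrA.
by apply: ler_wpM2r; [rewrite exprn_ge0 | exact: aC].
Qed.

Lemma geometric_sum_le x N : 0 <= x < 1 -> \sum_(k < N) x ^+ k <= (1 - x)^-1.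
Proof.
move=> /andP[x0 x1].
have := congr1 (fun u : nat -> R => u N) (geometric_seriesE 1 (negbT (lt_eqF x1))).
rewrite /series /= big_mkord /geometric /=; under eq_bigr do rewrite mul1r.
move=> ->; rewrite mul1r ler_pdivrMr ?subr_gt0 // mulVf ?subr_eq0 ?(gt_eqF x1) //.
by rewrite gerBl exprn_ge0.
Qed.

Lemma pseries_cvg a C K s :
  geom_bounded a C K -> 0 <= K -> `|s| * K < 1 -> cvgn (pseries a s).
Proof.
move=> aC K0 sK; apply: normed_cvg.
have C0 := geom_bounded_ge0 aC.
apply: (@series_le_cvg _ _ (geometric C (`|s| * K))).
- by move=> n /=; rewrite normr_ge0.
- by move=> n; apply: geometric_ge0 => //; rewrite mulr_ge0.
- move=> n; rewrite /geometric /= normrM normrX exprMn [_ ^+ n * _]mulrC mulrA.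
  by apply: ler_wpM2r; [rewrite exprn_ge0|].
- by apply: is_cvg_geometric_series; rewrite ger0_norm ?mulr_ge0.
Qed.

Lemma pseries_cvg_head a s :
  (forall k, a k.+1 * s ^+ k.+1 = 0) -> pseries a s @ \oo --> a 0%N.
Proof.
move=> a0; apply: cvg_near_cst; near=> M.
have M0 : (0 < M)%N by near: M; exact: nbhs_infty_gt.
rewrite /pseries seriesEord /= -(prednK M0) big_ord_recl expr0 mulr1 big1 ?addr0 //.
by move=> i _; rewrite a0.
Unshelve. all: by end_near. Qed.

Lemma pseries_lim_head_le a C K s l :
  geom_bounded a C K -> 0 <= K -> `|s| * K <= 2^-1 ->
  pseries a s @ \oo --> l -> `|l - a 0%N| <= 2 * C * (`|s| * K).
Proof.
move=> aC K0 sK al; set th := `|s| * K in sK *.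
have th0 : 0 <= th by rewrite mulr_ge0.
have C0 := geom_bounded_ge0 aC.
have dist_cvg : (fun M => `|pseries a s M - a 0%N|) @ \oo --> `|l - a 0%N|.
  by apply: cvg_norm; apply: cvgB => //; exact: cvg_cst.
rewrite -(cvg_lim _ dist_cvg) //; apply: limr_le; first by apply/cvg_ex; exists `|l - a 0%N|.
near=> M; have M0 : (0 < M)%N by near: M; exact: nbhs_infty_gt.
rewrite /pseries seriesEord /= -(prednK M0) big_ord_recl expr0 mulr1 addrAC subrr add0r.
apply: (le_trans (ler_norm_sum _ _ _)).
apply: (@le_trans _ _ (\sum_(i < M.-1) C * th * th ^+ i)).
  apply: ler_sum => i _; rewrite normrM normrX.
  rewrite -mulrA -exprS exprMn [_ ^+ _ * _]mulrC mulrA.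
  by apply: ler_wpM2r; [rewrite exprn_ge0 | exact: aC].
rewrite -mulr_sumr (_ : 2 * C * th = C * th * 2); last by ring.
apply: ler_wpM2l; first by rewrite mulr_ge0.
apply: (le_trans (geometric_sum_le _ _)); first by rewrite th0 /=; lra.
by rewrite invf_ple ?posrE; lra.
Unshelve. all: by end_near. Qed.

Lemma conv_trunc a b M N :
  (N < M)%N -> conv (trunc M a) (trunc M b) N = conv a b N.
Proof.
move=> NM; apply: eq_bigr => i _; rewrite /trunc.
have iN : (i <= N)%N by rewrite -ltnS.
by rewrite (leq_ltn_trans iN NM) (leq_ltn_trans (leq_subr i N) NM).
Qed.

Lemma conv_scale a b s N :
  conv (fun k => a k * s ^+ k) (fun k => b k * s ^+ k) N = conv a b N * s ^+ N.
Proof.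
rewrite /conv mulr_suml; apply: eq_bigr => i _.
by rewrite mulrACA -exprD subnKC // -ltnS.
Qed.

Lemma sumr_mul_conv a b M :
  (\sum_(i < M) a i) * (\sum_(i < M) b i) =
  \sum_(N < M + M) conv (trunc M a) (trunc M b) N.
Proof.
have horner1 (P : {poly R}) n : (size P <= n)%N -> P.[1] = \sum_(i < n) P`_i.
  by move=> Pn; rewrite (horner_coef_wide _ Pn); under eq_bigr do rewrite expr1n mulr1.
have poly1 c : (\poly_(i < M) c i : {poly R}).[1] = \sum_(i < M) c i.
  by rewrite (horner1 _ _ (size_poly _ _)); apply: eq_bigr => i _; rewrite coef_poly ltn_ord.
rewrite -!poly1 -hornerM (horner1 _ (M + M)); last first.
  apply: (leq_trans (size_polyMleq _ _)); rewrite -subn1 leq_subLR.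
  by rewrite (leq_trans (leq_add (size_poly _ _) (size_poly _ _))) // leq_addl.
by apply: eq_bigr => N _; rewrite coefM; apply: eq_bigr => i _; rewrite !coef_poly.
Qed.

Lemma conv_bound a b C D K N :
  0 <= K -> geom_bounded a C K -> geom_bounded b D K ->
  `|conv a b N| <= C * D * (2 * K) ^+ N.
Proof.
move=> K0 aC bD; have C0 := geom_bounded_ge0 aC; have D0 := geom_bounded_ge0 bD.
apply: (le_trans (ler_norm_sum _ _ _)).
apply: (@le_trans _ _ (\sum_(i < N.+1) C * D * K ^+ N)).
  apply: ler_sum => i _; rewrite normrM.
  have -> : C * D * K ^+ N = (C * K ^+ i) * (D * K ^+ (N - i)).
    by rewrite mulrACA -exprD subnKC // -ltnS.
  exact: ler_pM.
rewrite sumr_const card_ord -mulrnAr exprMn; apply: ler_wpM2l; first exact: mulr_ge0.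
rewrite -mulr_natl; apply: ler_wpM2r; first exact: exprn_ge0.
by rewrite -natrX ler_nat ltn_expl.
Qed.

Lemma conv_sum_le a b M : (forall k, 0 <= a k) -> (forall k, 0 <= b k) ->
  \sum_(N < M) conv a b N <= (\sum_(i < M) a i) * (\sum_(i < M) b i).
Proof.
move=> a0 b0; rewrite sumr_mul_conv big_split_ord /=.
under [X in _ <= X + _]eq_bigr do rewrite conv_trunc //.
rewrite lerDl; apply: sumr_ge0 => N _; apply: sumr_ge0 => i _.
by rewrite /trunc; case: ifP; case: ifP; rewrite ?mulr0 ?mul0r ?mulr_ge0.
Qed.

Lemma sumr_mul_conv_tail_le a b C D K M :
  0 <= K -> 2 * K < 1 -> geom_bounded a C K -> geom_bounded b D K ->
  `|(\sum_(i < M) a i) * (\sum_(i < M) b i) - \sum_(N < M) conv a b N|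
    <= C * D * (1 - 2 * K)^-1 * (2 * K) ^+ M.
Proof.
move=> K0 K1 aC bD; have C0 := geom_bounded_ge0 aC; have D0 := geom_bounded_ge0 bD.
rewrite sumr_mul_conv big_split_ord /=.
under [X in `|X + _ - _|]eq_bigr do rewrite conv_trunc //.
rewrite addrAC subrr add0r; apply: (le_trans (ler_norm_sum _ _ _)).
apply: (@le_trans _ _ (\sum_(N < M) C * D * (2 * K) ^+ M * (2 * K) ^+ N)).
  apply: ler_sum => N _; rewrite -mulrA -exprD.
  by apply: conv_bound => //; apply: geom_bounded_trunc.
rewrite -mulr_sumr [X in _ <= X]mulrAC.
apply: ler_wpM2l; first by rewrite !mulr_ge0 ?exprn_ge0 ?mulr_ge0.
by apply: geometric_sum_le; rewrite K1 mulr_ge0.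
Qed.

Lemma pseries_conv a b C D K s :
  0 <= K -> `|s| * (2 * K) < 1 -> geom_bounded a C K -> geom_bounded b D K ->
  pseries (conv a b) s @ \oo --> limn (pseries a s) * limn (pseries b s).
Proof.
move=> K0 sK aC bD; have C0 := geom_bounded_ge0 aC; have D0 := geom_bounded_ge0 bD.
set th := `|s| * (2 * K) in sK.
have th0 : 0 <= th by rewrite mulr_ge0 ?mulr_ge0.
have sK1 : `|s| * K < 1 by apply: le_lt_trans sK; rewrite ler_wpM2l //; lra.
pose err M := C * D * (1 - th)^-1 * th ^+ M.
pose defect M := pseries a s M * pseries b s M - pseries (conv a b) s M.
have thE : th = 2 * (K * `|s|) by rewrite /th; ring.
have defect_le M : `|defect M| <= err M.
  rewrite /defect /err /pseries !seriesEord /=.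
  under [X in `|_ - X|]eq_bigr do rewrite -conv_scale.
  rewrite thE; apply: sumr_mul_conv_tail_le; rewrite -?thE ?mulr_ge0 //.
    exact: geom_bounded_scale.
  exact: geom_bounded_scale.
have err0 : err @ \oo --> 0.
  rewrite -(mulr0 (C * D * (1 - th)^-1)); apply: cvgM; first exact: cvg_cst.
  by apply: cvg_expr; rewrite ger0_norm.
have defect0 : defect @ \oo --> 0.
  apply: (@squeeze_cvgr _ _ _ _ (fun M => - err M) err); last exact: err0.
    by near=> M; rewrite -ler_norml.
  by rewrite -oppr0; apply: cvgN.
have -> : pseries (conv a b) s = (fun M => pseries a s M * pseries b s M - defect M).
  by apply: funext => M; rewrite /defect subKr.
rewrite -[X in _ --> X]subr0; apply: cvgB defect0; apply: cvgM.
  exact: pseries_cvg aC K0 sK1.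
exact: pseries_cvg bD K0 sK1.
Unshelve. all: by end_near. Qed.

Lemma pseriesD a b s :
  pseries (fun k => a k + b k) s = (fun M => pseries a s M + pseries b s M).
Proof.
apply: funext => M; rewrite /pseries !seriesEord -big_split.
by apply: eq_bigr => k _; rewrite mulrDl.
Qed.

Implicit Types (f g : R -> R) (t r : R).

Definition has_pseries f t0 a r :=
  forall t, `|t - t0| < r -> pseries a (t - t0) @ \oo --> f t.

Lemma has_pseries_center f t0 a r : 0 < r -> has_pseries f t0 a r -> f t0 = a 0%N.
Proof.
move=> r0 fa; have := fa t0; rewrite subrr normr0 => /(_ r0) /(cvg_lim _) <- //.
by apply: cvg_lim => //; apply: pseries_cvg_head => k; rewrite expr0n mulr0.
Qed.

Lemma analytic_at_bounded f t0 : analytic_at f t0 ->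
  exists a C K r, [/\ 0 < K, 0 < r, geom_bounded a C K & has_pseries f t0 a r].
Proof.
move=> [r [r0 [a fa]]]; have r2 : 0 < r / 2 by rewrite divr_gt0.
have := fa (t0 + r / 2); rewrite addrAC subrr add0r ger0_norm ?ltW //.
rewrite ltr_pdivrMr // ltr_pMr // ltr1n => /(_ isT) /cvgP /cvg_series_bounded[M [_ aM]].
exists a, (`|M| + 1), (r / 2)^-1, r; split; rewrite ?invr_gt0 //.
move=> k; have /aM : M < `|M| + 1 by rewrite (le_lt_trans (ler_norm _)) // ltrDl.
move=> /(_ k I) /=; rewrite normrM normrX (ger0_norm (ltW r2)).
by rewrite exprVn ler_pdivlMr ?exprn_gt0.
Qed.

Lemma analytic_at_shrink f t0 a K r : 0 <= K -> 0 < r ->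
  (forall t, `|t - t0| < r -> `|t - t0| * K < 1 -> pseries a (t - t0) @ \oo --> f t) ->
  analytic_at f t0.
Proof.
move=> K0 r0 fa; have K1 : 0 < K + 1 by rewrite ltr_wpDl.
exists (Order.min r (K + 1)^-1); split; first by rewrite lt_min r0 invr_gt0.
exists a => t; rewrite lt_min => /andP[tr tK]; apply: fa => //.
apply: (@le_lt_trans _ _ (`|t - t0| * (K + 1))); first by rewrite ler_wpM2l // lerDl.
by rewrite -ltr_pdivlMr // mul1r.
Qed.

Lemma analytic_at_continuous f t0 : analytic_at f t0 -> {for t0, continuous f}.
Proof.
move=> /analytic_at_bounded[a [C [K [r [K0 r0 aC fa]]]]].
have C0 := geom_bounded_ge0 aC.
apply/cvgrPdist_le => e e0; rewrite (has_pseries_center r0 fa).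
have CK1 : 0 < 2 * C * K + 1 by apply: ltr_wpDl => //; rewrite !mulr_ge0 // ltW.
exists (Order.min r (Order.min (2 * K)^-1 (e / (2 * C * K + 1)))) => /=.
  by rewrite !lt_min r0 invr_gt0 mulr_gt0 //= divr_gt0.
move=> t; rewrite /ball /= !lt_min distrC => /and3P[tr tK te].
rewrite distrC; apply: (le_trans (pseries_lim_head_le aC (ltW K0) _ (fa t tr))).
  by rewrite -ler_pdivlMr // -invfM; apply: ltW.
move: te; rewrite ltr_pdivlMr // => /ltW; apply: le_trans.
by rewrite mulrCA -mulrA ler_wpM2l // lerDl.
Qed.

Lemma analytic_cst (c t0 : R) : analytic_at (fun=> c) t0.
Proof.
exists 1; split => //; exists (fun k => if k is 0%N then c else 0) => t _.
by apply: pseries_cvg_head => k; rewrite mul0r.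
Qed.

Lemma analyticD f g t0 :
  analytic_at f t0 -> analytic_at g t0 -> analytic_at (fun t => f t + g t) t0.
Proof.
move=> [r [r0 [a fa]]] [r' [r0' [b gb]]].
exists (Order.min r r'); split; first by rewrite lt_min r0 r0'.
exists (fun k => a k + b k) => t; rewrite lt_min => /andP[tr tr'].
by rewrite -/(pseries _ _) pseriesD; apply: cvgD; [apply: fa | apply: gb].
Qed.

Lemma analyticM f g t0 :
  analytic_at f t0 -> analytic_at g t0 -> analytic_at (fun t => f t * g t) t0.
Proof.
move=> /analytic_at_bounded[a [C [K [r [K0 r0 aC fa]]]]].
move=> /analytic_at_bounded[b [D [L [r' [L0 r0' bD gb]]]]].
have KL0 : 0 <= K + L by rewrite addr_ge0 ?ltW.
have aC' : geom_bounded a C (K + L) by apply: geom_boundedW aC; rewrite ?lerDl ltW.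
have bD' : geom_bounded b D (K + L) by apply: geom_boundedW bD; rewrite ?lerDr ltW.
apply: (@analytic_at_shrink _ _ (conv a b) (2 * (K + L)) (Order.min r r')).
- by rewrite mulr_ge0.
- by rewrite lt_min r0 r0'.
move=> t; rewrite lt_min => /andP[tr tr'] tK.
rewrite -(cvg_lim _ (fa t tr)) // -(cvg_lim _ (gb t tr')) //.
exact: pseries_conv aC' bD'.
Qed.

Lemma analyticN f t0 : analytic_at f t0 -> analytic_at (fun t => - f t) t0.
Proof.
by move=> /(analyticM (analytic_cst (-1) t0)); under eq_fun do rewrite mulN1r.
Qed.

Lemma analyticB f g t0 :
  analytic_at f t0 -> analytic_at g t0 -> analytic_at (fun t => f t - g t) t0.
Proof. by move=> fa /analyticN; apply: analyticD. Qed.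

Lemma analytic_sum (I : Type) (s : seq I) (P : pred I) (F : I -> R -> R) t0 :
  (forall i, analytic_at (F i) t0) ->
  analytic_at (fun t => \sum_(i <- s | P i) F i t) t0.
Proof.
move=> FA; elim: s => [|i s IH].
  by under eq_fun do rewrite big_nil; apply: analytic_cst.
by under eq_fun do rewrite big_cons; case: (P i) => //; apply: analyticD.
Qed.

End PowerSeries.

(* The majorants of the inverse and square-root coefficients below are
   geometric with ratio [(2 + c)^-1], where [c] is [C / |a 0|]; this is the
   estimate that closes both inductions. *)
Lemma scaled_geometric_sum_le1 (R : realType) (c : R) N :
  0 <= c -> c * \sum_(k < N) ((2 + c)^-1) ^+ k.+1 <= 1.
Proof.
move=> c0; set x := (2 + c)^-1.
have x0 : 0 <= x by rewrite invr_ge0; lra.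
have x1 : x < 1 by rewrite invf_lt1; lra.
under eq_bigr do rewrite exprS; rewrite -mulr_sumr.
apply: (@le_trans _ _ (c * (x * (1 - x)^-1))).
  by rewrite ler_wpM2l // ler_wpM2l // geometric_sum_le // x0.
have -> : c * (x * (1 - x)^-1) = c / (1 + c) by rewrite /x; field; lra.
by rewrite ler_pdivrMr; lra.
Qed.

Section PowerSeriesInverse.
Variables (R : realType) (a : nat -> R).

Definition inv_coef := strong_rec 0 (fun N z =>
  if N is 0%N then (a 0%N)^-1
  else - (a 0%N)^-1 * \sum_(k < N) a k.+1 * z (N - k.+1)%N).

Lemma inv_coefE N : inv_coef N =
  if N is 0%N then (a 0%N)^-1
  else - (a 0%N)^-1 * \sum_(k < N) a k.+1 * inv_coef (N - k.+1)%N.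
Proof.
rewrite /inv_coef strong_recE //; case=> // n g g' gg'.
by congr (_ * _); apply: eq_bigr => k _; rewrite gg' // ltn_subrL.
Qed.

Hypothesis a0 : a 0%N != 0.

Lemma conv_inv_coef N : conv a inv_coef N = if N is 0%N then 1 else 0.
Proof.
rewrite /conv big_ord_recl subn0 inv_coefE; case: N => [|N].
  by rewrite big_ord0 addr0 mulfV.
by rewrite mulrA mulrN mulfV // mulN1r addNr.
Qed.

Variables (C K : R).
Hypotheses (K0 : 0 < K) (aC : geom_bounded a C K).

Lemma inv_coef_bound : geom_bounded inv_coef `|a 0%N|^-1 (K * (2 + C / `|a 0%N|)).
Proof.
set c := C / `|a 0%N|; set L := K * (2 + c).
have c0 : 0 <= c by rewrite divr_ge0 ?(geom_bounded_ge0 aC).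
have CE : C = c * `|a 0%N| by rewrite /c divfK ?normr_eq0.
have L0 : 0 < L by rewrite mulr_gt0 //; lra.
have KE : K = (2 + c)^-1 * L by rewrite /L mulrCA mulVf ?mulr1 //; lra.
clearbody L; elim/ltn_ind => N IH; rewrite inv_coefE; case: N IH => [_|N IH].
  by rewrite expr0 mulr1 normfV.
rewrite normrM normrN normfV; apply: ler_wpM2l; first by rewrite invr_ge0.
apply: (le_trans (ler_norm_sum _ _ _)).
apply: (@le_trans _ _ (\sum_(k < N.+1) c * L ^+ N.+1 * ((2 + c)^-1) ^+ k.+1)).
  apply: ler_sum => k _; rewrite normrM.
  have -> : c * L ^+ N.+1 * ((2 + c)^-1) ^+ k.+1 =
      (C * K ^+ k.+1) * (`|a 0%N|^-1 * L ^+ (N.+1 - k.+1)).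
    rewrite -{1}(subnKC (ltn_ord k)) exprD KE exprMn CE.
    move: (_ ^+ k.+1) (L ^+ k.+1) (L ^+ _) => u v w.
    by field; rewrite normr_eq0.
  by apply: ler_pM => //; apply: IH; rewrite ltn_subrL.
rewrite -mulr_sumr mulrAC -[X in _ <= X]mul1r.
by apply: ler_wpM2r; [rewrite exprn_ge0 ?ltW | exact: scaled_geometric_sum_le1].
Qed.

End PowerSeriesInverse.

Section PowerSeriesSqrt.
Variables (R : realType) (a : nat -> R).

Definition sqrt_coef := strong_rec 0 (fun N y =>
  if N is N'.+1 then
    (2 * Num.sqrt (a 0%N))^-1 * (a N - \sum_(i < N') y i.+1 * y (N - i.+1)%N)
  else Num.sqrt (a 0%N)).

Lemma sqrt_coefE N : sqrt_coef N =
  if N is N'.+1 then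
    (2 * Num.sqrt (a 0%N))^-1 * (a N - \sum_(i < N') sqrt_coef i.+1 * sqrt_coef (N - i.+1)%N)
  else Num.sqrt (a 0%N).
Proof.
rewrite /sqrt_coef strong_recE //; case=> // n g g' gg'.
congr (_ * (_ - _)); apply: eq_bigr => i _.
have ilt : (i.+1 < n.+1)%N by rewrite ltnS.
by rewrite !gg' // ltn_subrL.
Qed.

Hypothesis a0 : 0 < a 0%N.

Let y0 := Num.sqrt (a 0%N).

Let y0_gt0 : 0 < y0. Proof. by rewrite sqrtr_gt0. Qed.

Let y0E : y0 ^+ 2 = a 0%N. Proof. by rewrite sqr_sqrtr ?ltW. Qed.

Lemma conv_sqrt_coef N : conv sqrt_coef sqrt_coef N = a N.
Proof.
rewrite /conv big_ord_recl subn0; case: N => [|N].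
  by rewrite big_ord0 addr0 sqrt_coefE -expr2 y0E.
rewrite big_ord_recr /= subnn (sqrt_coefE N.+1) (sqrt_coefE 0).
under eq_bigr do rewrite subSS.
set S := \sum_(i < N) _; rewrite -/y0.
by field; rewrite gt_eqF.
Qed.

Variables (C K : R).
Hypotheses (K0 : 0 < K) (aC : geom_bounded a C K).

Let c := C / a 0%N.
Let x := (K * (2 + c))^-1.
Let g j := `|sqrt_coef j.+1| * x ^+ j.+1.

Let c_ge0 : 0 <= c. Proof. by rewrite divr_ge0 ?(geom_bounded_ge0 aC) ?ltW. Qed.
Let x_gt0 : 0 < x. Proof. by rewrite invr_gt0 mulr_gt0 //; have := c_ge0; lra. Qed.
Let g_ge0 j : 0 <= g j. Proof. exact: mulr_ge0 (normr_ge0 _) (exprn_ge0 _ (ltW x_gt0)). Qed.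

Lemma sqrt_coef_step N :
  2 * y0 * g N <= `|a N.+1| * x ^+ N.+1 + \sum_(i < N) g i * g (N.-1 - i)%N.
Proof.
rewrite /g sqrt_coefE normrM normfV (gtr0_norm (_ : 0 < 2 * y0)) ?mulr_gt0 //.
rewrite mulrA mulrA mulfV ?mulf_neq0 ?gt_eqF // mul1r.
apply: (@le_trans _ _ ((`|a N.+1| + \sum_(i < N) `|sqrt_coef i.+1| * `|sqrt_coef (N - i)%N|)
  * x ^+ N.+1)).
  apply: ler_wpM2r; first by rewrite exprn_ge0 ?ltW.
  apply: (le_trans (ler_normB _ _)); rewrite lerD //.
  by apply: (le_trans (ler_norm_sum _ _ _)); apply: ler_sum => i _; rewrite subSS normrM.
rewrite mulrDl lerD // mulr_suml; apply: ler_sum => i _.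
have iN : (i < N)%N by [].
have N0 : (0 < N)%N := leq_ltn_trans (leq0n i) iN.
rewrite (_ : (N.-1 - i).+1 = N - i)%N; last by rewrite -subSn ?prednK // -ltnS prednK.
by rewrite [X in _ <= X]mulrACA -exprD addSn subnKC // ltnW.
Qed.

(* [2 y0 T_(M+1) <= y0^2 + T_M^2] for the partial sums [T] of [g], hence
   [T_M <= y0] by induction. *)
Lemma sqrt_coef_majorant M : \sum_(j < M) g j <= y0.
Proof.
elim: M => [|M IH]; first by rewrite big_ord0 ltW.
have : 2 * y0 * \sum_(j < M.+1) g j <= y0 ^+ 2 + (\sum_(j < M) g j) ^+ 2.
  rewrite mulr_sumr; apply: le_trans; first by apply: ler_sum => N _; exact: sqrt_coef_step.
  rewrite big_split /= y0E; apply: lerD.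
    apply: (@le_trans _ _ (a 0%N * (c * \sum_(N < M.+1) ((2 + c)^-1) ^+ N.+1))).
      rewrite mulr_sumr mulr_sumr; apply: ler_sum => N _.
      rewrite mulrA (_ : a 0%N * c = C); last by rewrite /c mulrC divfK ?gt_eqF.
      rewrite (_ : (2 + c)^-1 = K * x); last by rewrite /x invfM mulrA mulfV ?gt_eqF ?mul1r.
      rewrite exprMn mulrA; apply: ler_wpM2r; [exact: exprn_ge0 (ltW x_gt0) | exact: aC].
    rewrite -[X in _ <= X]mulr1; apply: ler_wpM2l; first exact: ltW.
    exact: scaled_geometric_sum_le1 c_ge0.
  rewrite big_ord_recl big_ord0 add0r expr2.
  apply: le_trans (conv_sum_le _ g_ge0 g_ge0); apply: ler_sum => N _.
  by apply: ler_sum => i _.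
have T0 : 0 <= \sum_(j < M) g j by apply: sumr_ge0 => j _.
have TT : (\sum_(j < M) g j) ^+ 2 <= y0 ^+ 2 by apply: lerXn2r; rewrite // nnegrE // ltW.
move=> h; rewrite -(@ler_pM2l _ (2 * y0)) ?mulr_gt0 //; apply: (le_trans h); lra.
Qed.

Lemma sqrt_coef_bound : geom_bounded sqrt_coef y0 (K * (2 + C / a 0%N)).
Proof.
case=> [|j]; first by rewrite sqrt_coefE expr0 mulr1 ger0_norm // sqrtr_ge0.
have : g j <= y0.
  by apply: le_trans (sqrt_coef_majorant j.+1); rewrite big_ord_recr /= lerDr sumr_ge0.
rewrite (_ : K * _ = x^-1); last by rewrite invrK.
by rewrite exprVn ler_pdivlMr ?exprn_gt0.
Qed.

End PowerSeriesSqrt.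

Section AnalyticInvSqrt.
Variable R : realType.
Implicit Types (f : R -> R).

Lemma analyticV f (t0 : R) :
  analytic_at f t0 -> f t0 != 0 -> analytic_at (fun t => (f t)^-1) t0.
Proof.
move=> /analytic_at_bounded[a [C [K [r [K0 r0 aC fa]]]]].
rewrite (has_pseries_center r0 fa) => a0.
have zB := inv_coef_bound a0 K0 aC; set L := K * _ in zB.
have L0 : 0 <= L.
  by apply: mulr_ge0 (ltW K0) (addr_ge0 _ (divr_ge0 (geom_bounded_ge0 aC) _)); rewrite ?ler0n.
have KL0 : 0 <= K + L by rewrite addr_ge0 // ltW.
have aC' : geom_bounded a C (K + L) by apply: geom_boundedW aC; rewrite ?lerDl // ltW.
have zB' : geom_bounded (inv_coef a) `|a 0%N|^-1 (K + L).
  by apply: geom_boundedW zB => //; rewrite lerDr ltW.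
apply: (@analytic_at_shrink _ _ _ (inv_coef a) (2 * (K + L)) r); rewrite ?mulr_ge0 //.
move=> t tr tK; set s := t - t0 in tr tK *.
have z_cvg : cvgn (pseries (inv_coef a) s).
  by apply: pseries_cvg zB' KL0 _; apply: le_lt_trans tK; rewrite ler_wpM2l //; lra.
have conv1 : pseries (conv a (inv_coef a)) s @ \oo --> (1 : R).
  rewrite (_ : conv a (inv_coef a) = fun N => if N is 0%N then 1 else 0).
    by apply: pseries_cvg_head => k; rewrite mul0r.
  by apply: funext => N; rewrite conv_inv_coef.
have prod1 : f t * limn (pseries (inv_coef a) s) = 1.
  rewrite -(cvg_lim _ (fa t tr)) // -(cvg_lim _ (pseries_conv KL0 tK aC' zB')) //.
  exact: cvg_lim conv1.
have ft0 : f t != 0.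
  by apply/eqP => ft0; move: prod1; rewrite ft0 mul0r => /eqP; rewrite eq_sym oner_eq0.
by rewrite (_ : (f t)^-1 = limn (pseries (inv_coef a) s)) // -[RHS](mulKf ft0) prod1 mulr1.
Qed.

Lemma analytic_sqrt f (t0 : R) :
  analytic_at f t0 -> 0 < f t0 -> analytic_at (fun t => Num.sqrt (f t)) t0.
Proof.
move=> /analytic_at_bounded[a [C [K [r [K0 r0 aC fa]]]]].
rewrite (has_pseries_center r0 fa) => a0.
have yB := sqrt_coef_bound a0 K0 aC; set L := K * _ in yB.
have L0 : 0 <= L.
  apply: mulr_ge0 (ltW K0) (addr_ge0 _ (divr_ge0 (geom_bounded_ge0 aC) (ltW a0))).
  by rewrite ler0n.
have KL0 : 0 <= K + L by rewrite addr_ge0 // ltW.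
have yB' : geom_bounded (sqrt_coef a) (Num.sqrt (a 0%N)) (K + L).
  by apply: geom_boundedW yB => //; rewrite lerDr ltW.
apply: (@analytic_at_shrink _ _ _ (sqrt_coef a) (2 * (K + L)) r); rewrite ?mulr_ge0 //.
move=> t tr tK; set s := t - t0 in tr tK *.
have sL : `|s| * L < 2^-1.
  have : `|s| * (2 * L) <= `|s| * (2 * (K + L))
    by apply: ler_wpM2l => //; apply: ler_wpM2l => //; rewrite lerDr ltW.
  rewrite mulrCA; lra.
have y_cvg : cvgn (pseries (sqrt_coef a) s).
  by apply: pseries_cvg yB L0 _; lra.
set l := limn (pseries (sqrt_coef a) s) in y_cvg *.
have l_gt0 : 0 < l.
  have := pseries_lim_head_le yB L0 (ltW sL) y_cvg; rewrite sqrt_coefE ler_distl.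
  have := sqrtr_gt0 (a 0%N); rewrite a0 => y0 /andP[+ _]; apply: lt_le_trans.
  by rewrite subr_gt0 mulrAC -[X in _ < X]mul1r ltr_pM2r //; lra.
have fE : f t = l * l.
  have := pseries_conv KL0 tK yB' yB'.
  rewrite (_ : conv _ _ = a); last by apply: funext => N; apply: conv_sqrt_coef.
  by move/(cvg_lim _) <- => //; rewrite (cvg_lim _ (fa t tr)).
by rewrite (_ : Num.sqrt (f t) = l) // fE -expr2 sqrtr_sqr gtr0_norm.
Qed.

End AnalyticInvSqrt.

Section DotProduct.
Variables (R : realType) (d : nat).
Implicit Types (u v x : 'rV[R]_d).

Definition dot u v : R := (u *m v^T) 0 0.

Lemma dotE u v : dot u v = \sum_(m < d) u 0 m * v 0 m.
Proof. by rewrite /dot mxE; apply: eq_bigr => m _; rewrite mxE. Qed.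

Lemma dotC u v : dot u v = dot v u.
Proof. by rewrite !dotE; apply: eq_bigr => m _; rewrite mulrC. Qed.

Lemma dotDl u v x : dot (u + v) x = dot u x + dot v x.
Proof. by rewrite /dot mulmxDl !mxE. Qed.

Lemma dotBl u v x : dot (u - v) x = dot u x - dot v x.
Proof. by rewrite /dot mulmxBl !mxE. Qed.

Lemma dotZl (c : R) u x : dot (c *: u) x = c * dot u x.
Proof. by rewrite /dot -scalemxAl mxE. Qed.

Lemma dot_suml (I : Type) (s : seq I) (P : pred I) (F : I -> 'rV[R]_d) x :
  dot (\sum_(i <- s | P i) F i) x = \sum_(i <- s | P i) dot (F i) x.
Proof. by rewrite /dot mulmx_suml summxE. Qed.

Lemma dot_gt0 v : (0 < dot v v) = (v != 0).
Proof.
have sq_ge0 m : 0 <= v 0 m * v 0 m by rewrite -expr2 sqr_ge0.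
rewrite lt_neqAle dotE sumr_ge0 // andbT eq_sym; congr negb; apply/eqP/eqP => [v0|->].
  apply/rowP => m; rewrite mxE; apply/eqP.
  by have /eqP := psumr_eq0P (fun m _ => sq_ge0 m) v0 (i := m) isT; rewrite mulf_eq0 orbb.
by rewrite big1 // => m _; rewrite mxE mul0r.
Qed.

Lemma mulmx_tr_row (k : nat) (A : 'M[R]_(k, d)) v (j : 'I_k) :
  (v *m A^T) 0 j = dot v (row j A).
Proof. by rewrite dotE mxE; apply: eq_bigr => m _; rewrite !mxE. Qed.

End DotProduct.

Definition residual (R : realType) d (w e : nat -> 'rV[R]_d) k :=
  w k - \sum_(j < k) dot (w k) (e j) *: e j.

Definition normalize (R : realType) d (v : 'rV[R]_d) := (Num.sqrt (dot v v))^-1 *: v.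

Definition gram_schmidt (R : realType) d (w : nat -> 'rV[R]_d) :=
  strong_rec 0 (fun k e => normalize (residual w e k)).

Notation gs_residual w k := (residual w (gram_schmidt w) k).

Definition gs_mx (R : realType) d (w : nat -> 'rV[R]_d) : 'M[R]_d :=
  \matrix_(k, m) gram_schmidt w k 0 m.

Section GramSchmidt.
Variables (R : realType) (d : nat).
Implicit Types (v : 'rV[R]_d) (w e : nat -> 'rV[R]_d).

Lemma gram_schmidtE w k : gram_schmidt w k = normalize (gs_residual w k).
Proof.
rewrite /gram_schmidt strong_recE // => n e e' ee'.
suff -> : residual w e n = residual w e' n by [].
by congr (_ - _); apply: eq_bigr => j _; rewrite ee'.
Qed.

Lemma dot_normalize v : v != 0 -> dot (normalize v) (normalize v) = 1.
Proof.
rewrite -dot_gt0 => v0; rewrite /normalize dotZl dotC dotZl mulrA -expr2 exprVn.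
by rewrite sqr_sqrtr ?ltW // mulVf ?gt_eqF.
Qed.

Lemma normalizeK v : v != 0 -> Num.sqrt (dot v v) *: normalize v = v.
Proof.
by rewrite -dot_gt0 => v0; rewrite scalerA mulfV ?scale1r // gt_eqF ?sqrtr_gt0.
Qed.

Lemma gram_schmidt_orthonormal w N :
  (forall k, (k < N)%N -> gs_residual w k != 0) ->
  forall i j, (i < N)%N -> (j < N)%N ->
  dot (gram_schmidt w i) (gram_schmidt w j) = (i == j)%:R.
Proof.
elim: N => // N IH res_neq0.
have {}IH := IH (fun k kN => res_neq0 k (ltnW kN)).
have lastE j : (j <= N)%N -> dot (gram_schmidt w N) (gram_schmidt w j) = (N == j)%:R.
  rewrite leq_eqVlt => /orP[/eqP->|jN].
    by rewrite eqxx gram_schmidtE dot_normalize // res_neq0.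
  suff res_orth : dot (gs_residual w N) (gram_schmidt w j) = 0.
    by rewrite (gtn_eqF jN) gram_schmidtE /normalize dotZl res_orth mulr0.
  rewrite /residual dotBl dot_suml.
  under eq_bigr => k _ do rewrite dotZl (IH k j (ltn_ord k) jN).
  rewrite (bigD1 (Ordinal jN)) //= eqxx mulr1 big1 ?addr0 ?subrr // => k.
  by rewrite -(inj_eq val_inj) /= => /negPf ->; rewrite mulr0.
move=> i j; rewrite !ltnS leq_eqVlt => /orP[/eqP-> /lastE //|iN].
rewrite leq_eqVlt => /orP[/eqP->|jN]; last exact: IH.
by rewrite dotC lastE 1?ltnW // eq_sym.
Qed.

Lemma gram_schmidt_triangular w N :
  (forall k, (k < N)%N -> gs_residual w k != 0) ->
  forall i j, (i < j)%N -> (j < N)%N -> dot (w i) (gram_schmidt w j) = 0.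
Proof.
move=> res_neq0 i j ij jN; have iN := ltn_trans ij jN.
have orth := gram_schmidt_orthonormal res_neq0.
have -> : w i = Num.sqrt (dot (gs_residual w i) (gs_residual w i)) *: gram_schmidt w i
    + \sum_(k < i) dot (w i) (gram_schmidt w k) *: gram_schmidt w k.
  by rewrite gram_schmidtE normalizeK ?res_neq0 // subrK.
rewrite dotDl dotZl orth // (ltn_eqF ij) mulr0 add0r.
rewrite dot_suml big1 // => k _; rewrite dotZl orth ?(ltn_trans (ltn_ord k) iN) //.
by rewrite (ltn_eqF (ltn_trans (ltn_ord k) ij)) mulr0.
Qed.

Lemma gram_schmidt_residual_neq0 (W : 'M[R]_d) w :
  row_free W -> (forall k : 'I_d, w k = row k W) ->
  forall k, (k < d)%N -> gs_residual w k != 0.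
Proof.
(* In the coordinates [X v] relative to the basis [W], the [k]-th residual has
   [k]-th coordinate 1 and [gram_schmidt w k] is supported on coordinates [<= k]. *)
move=> Wfree wE; have Wu : W \in unitmx by rewrite -row_free_unit.
pose X v := v *m invmx W.
suff coord k : (k < d)%N ->
    gs_residual w k != 0 /\ forall m : 'I_d, (k < m)%N -> X (gram_schmidt w k) 0 m = 0.
  by move=> k /coord[].
elim/ltn_ind: k => k IH kd; pose kk : 'I_d := Ordinal kd.
have lower j (m : 'I_d) : (j < k)%N -> (j < m)%N -> X (gram_schmidt w j) 0 m = 0.
  by move=> jk; apply: (IH j jk (ltn_trans jk kd)).2.
have Xres m : X (gs_residual w k) 0 m = (m == kk)%:R -
    \sum_(j < k) dot (w k) (gram_schmidt w j) * X (gram_schmidt w j) 0 m.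
  rewrite /X /residual mulmxBl mulmx_suml (wE kk) rowE mulmxK // !mxE eqxx /=.
  by congr (_ - _); rewrite summxE; apply: eq_bigr => j _; rewrite -scalemxAl mxE.
have res_kk : X (gs_residual w k) 0 kk = 1.
  by rewrite Xres eqxx big1 ?subr0 // => j _; rewrite lower ?mulr0.
have res_neq0 : gs_residual w k != 0.
  by apply/eqP => r0; move: res_kk; rewrite r0 /X mul0mx mxE => /eqP; rewrite eq_sym oner_eq0.
split=> // m km; rewrite gram_schmidtE /normalize /X -scalemxAl mxE -/(X _) Xres.
rewrite -(inj_eq val_inj) /= gtn_eqF // big1 ?subr0 ?mulr0 // => j _.
by rewrite lower ?mulr0 // (ltn_trans (ltn_ord j) km).
Qed.

Lemma dot_analytic (u v : R -> 'rV[R]_d) t0 :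
  (forall m, analytic_at (fun t => u t 0 m) t0) ->
  (forall m, analytic_at (fun t => v t 0 m) t0) ->
  analytic_at (fun t => dot (u t) (v t)) t0.
Proof.
by move=> ua va; under eq_fun do rewrite dotE; apply: analytic_sum => m; apply: analyticM.
Qed.

Lemma mulmx_tr_analytic k (u : R -> 'rV[R]_d) (M : R -> 'M[R]_(k, d)) t0 :
  (forall m, analytic_at (fun t => u t 0 m) t0) ->
  (forall i m, analytic_at (fun t => M t i m) t0) ->
  forall j, analytic_at (fun t => (u t *m (M t)^T) 0 j) t0.
Proof.
move=> ua Ma j; under eq_fun do rewrite mulmx_tr_row.
by apply: dot_analytic => // m; under eq_fun do rewrite mxE.
Qed.

Lemma residual_analytic (w : R -> nat -> 'rV[R]_d) t0 k :
  (forall m, analytic_at (fun t => w t k 0 m) t0) ->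
  (forall j m, (j < k)%N -> analytic_at (fun t => gram_schmidt (w t) j 0 m) t0) ->
  forall m, analytic_at (fun t => gs_residual (w t) k 0 m) t0.
Proof.
move=> wa ga m.
have -> : (fun t => gs_residual (w t) k 0 m) = fun t => w t k 0 m -
    \sum_(j < k) dot (w t k) (gram_schmidt (w t) j) * gram_schmidt (w t) j 0 m.
  by apply: funext => t; rewrite !mxE summxE; congr (_ - _); apply: eq_bigr => j _; rewrite mxE.
apply: analyticB (wa m) _; apply: analytic_sum => j; apply: analyticM; last exact: ga.
by apply: dot_analytic => // m'; apply: ga.
Qed.

Lemma gram_schmidt_analytic (w : R -> nat -> 'rV[R]_d) t0 N :
  (forall k m, (k < N)%N -> analytic_at (fun t => w t k 0 m) t0) ->
  (forall k, (k < N)%N -> gs_residual (w t0) k != 0) ->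
  forall k m, (k < N)%N -> analytic_at (fun t => gram_schmidt (w t) k 0 m) t0.
Proof.
move=> wa res_neq0; elim/ltn_ind => k IH m kN.
have ra := residual_analytic (fun m => wa k m kN) (fun j m jk => IH j jk m (ltn_trans jk kN)).
under eq_fun do rewrite gram_schmidtE /normalize mxE.
apply: analyticM (ra m); apply: analyticV.
  by apply: analytic_sqrt; [exact: dot_analytic | rewrite dot_gt0 res_neq0].
by rewrite gt_eqF // sqrtr_gt0 dot_gt0 res_neq0.
Qed.

Lemma gram_schmidt_residual_near (w : R -> nat -> 'rV[R]_d) t0 N :
  (forall k m, (k < N)%N -> analytic_at (fun t => w t k 0 m) t0) ->
  (forall k, (k < N)%N -> gs_residual (w t0) k != 0) ->
  exists2 e, 0 < e & forall t, `|t - t0| < e ->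
    forall k, (k < N)%N -> gs_residual (w t) k != 0.
Proof.
move=> wa res_neq0.
have near_k (k : 'I_N) : \forall t \near t0, 0 < dot (gs_residual (w t) k) (gs_residual (w t) k).
  have ra : forall m, analytic_at (fun t => gs_residual (w t) k 0 m) t0.
    apply: residual_analytic => [m|j m jk]; first exact: wa _ _ (ltn_ord k).
    exact: gram_schmidt_analytic wa res_neq0 _ _ (ltn_trans jk _).
  have /cvgr_gt : {for t0, continuous (fun t => dot (gs_residual (w t) k) (gs_residual (w t) k))}.
    exact/analytic_at_continuous/dot_analytic.
  by apply; rewrite dot_gt0 res_neq0.
have all_k : \forall t \near t0, forall k : 'I_N,
    0 < dot (gs_residual (w t) k) (gs_residual (w t) k) by apply: filter_forall _ near_k.
have [e e0 ball_e] := (nbhs_ballP _ _).1 all_k.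
exists e; first exact: e0.
move=> t te k kN.
have t_ball : ball t0 e t by rewrite /ball /= distrC.
by have := ball_e t t_ball (Ordinal kN); rewrite dot_gt0.
Qed.

Lemma row_gs_mx w (k : 'I_d) : row k (gs_mx w) = gram_schmidt w k.
Proof. by apply/rowP => m; rewrite !mxE. Qed.

Lemma gs_mx_orthogonal w :
  (forall k, (k < d)%N -> gs_residual w k != 0) -> orthogonal_mx (gs_mx w).
Proof.
move=> res_neq0; apply: mulmx1C; apply/matrixP => i j.
rewrite [RHS]mxE -val_eqE -(gram_schmidt_orthonormal res_neq0 (ltn_ord i) (ltn_ord j)).
by rewrite dotE mxE; apply: eq_bigr => m _; rewrite !mxE.
Qed.

Lemma gs_mx_triangular w :
  (forall k, (k < d)%N -> gs_residual w k != 0) ->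
  forall i (j : 'I_d), (i < j)%N -> (w i *m (gs_mx w)^T) 0 j = 0.
Proof.
move=> res_neq0 i j ij; rewrite mulmx_tr_row row_gs_mx.
exact: gram_schmidt_triangular res_neq0 _ _ ij (ltn_ord j).
Qed.

Lemma gs_mx_analytic (w : R -> nat -> 'rV[R]_d) t0 :
  (forall k m, (k < d)%N -> analytic_at (fun t => w t k 0 m) t0) ->
  (forall k, (k < d)%N -> gs_residual (w t0) k != 0) ->
  forall i j, analytic_at (fun t => gs_mx (w t) i j) t0.
Proof.
move=> wa res_neq0 i j; under eq_fun do rewrite mxE.
exact: gram_schmidt_analytic wa res_neq0 _ _ (ltn_ord i).
Qed.

End GramSchmidt.

Lemma row_free_completion (F : fieldType) d l (v : nat -> 'rV[F]_d) :
  \rank (\matrix_(i < l) v i) = l ->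
  exists Wc : 'M[F]_d, row_free (\matrix_(k < d) if (k < l)%N then v k else row k Wc).
Proof.
set V := \matrix_(i < l) v i => rV.
have ld : (l <= d)%N by rewrite -rV rank_leq_col.
set B := row_base (V^C)%MS.
have rB : \rank (V^C)%MS = (d - l)%N by rewrite mxrank_compl rV.
exists (\matrix_(k < d) if insub (k - l)%N is Some i then row i B else 0).
set M := \matrix_(k < d) _.
have rowM (k : 'I_d) : row k M = if (k < l)%N then v k else
    if insub (k - l)%N is Some i then row i B else 0 by rewrite !rowK.
have V_sub : (V <= M)%MS.
  apply/row_subP => i; have id : (i < d)%N := leq_trans (ltn_ord i) ld.
  by rewrite (_ : row i V = row (Ordinal id) M) ?row_sub // rowM /= ltn_ord rowK.
have B_sub : (B <= M)%MS.
  apply/row_subP => i; have id : (l + i < d)%N by rewrite -ltn_subRL -rB ltn_ord.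
  rewrite (_ : row i B = row (Ordinal id) M) ?row_sub //.
  by rewrite rowM /= ltnNge leq_addr /= addKn valK.
have full : (V + V^C <= M)%MS.
  by rewrite addsmx_sub V_sub -(eq_row_base V^C)%MS.
have := mxrankS full; move: (addsmx_compl_full V); rewrite /row_full => /eqP ->.
by rewrite /row_free eqn_leq rank_leq_col => ->.
Qed.

Lemma ptE (R : realType) n d (q : config R n d) j (jn : (j < n)%N) :
  pt q j = q (Ordinal jn).
Proof. by rewrite /pt insubT. Qed.

Lemma pt_analytic (R : realType) n d (p : R -> config R n d) (D : set R) t0 k m :
  traj_analytic_on p D -> D t0 -> analytic_at (fun t => pt (p t) k 0 m) t0.
Proof.
move=> p_an Dt0; rewrite /pt; case: insubP => [i _ _|_]; first exact: p_an.
by under eq_fun do rewrite mxE; apply: analytic_cst.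
Qed.

Lemma act_iso_pinned (R : realType) n d l (q : config R n d) (A : 'M[R]_d) :
  (forall i (j : 'I_d), (i < l)%N -> (i < j)%N -> ((pt q i.+1 - pt q 0) *m A^T) 0 j = 0) ->
  pinned l (act_iso A (- (pt q 0 *m A^T)) q).
Proof.
move=> edges i j il ij; rewrite /act_iso -mulmxBl.
case: i il ij => [[|i] iP] il ij; first by rewrite (ptE _ iP) subrr mul0mx mxE.
by rewrite -(ptE _ iP) edges.
Qed.

Theorem lemmaA5 (R : realType) (n d l : nat) (p : R -> config R n d) (delta : R) :
  0 < delta ->
  traj_analytic_on p [set t | 0 <= t < delta] ->
  affine_dim (p 0) = l ->
  nondegenerate_config (p 0) ->
  exists eps : R, 0 < eps /\
    exists (A : R -> 'M[R]_d) (b : R -> 'rV[R]_d),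
      (forall t, 0 <= t < eps -> orthogonal_mx (A t)) /\
      mx_analytic_on A [set t | 0 <= t < eps] /\
      mx_analytic_on b [set t | 0 <= t < eps] /\
      (forall t, 0 <= t < eps -> pinned l (act_iso (A t) (b t) (p t))).
Proof.
move=> delta0 p_an l_dim; rewrite /nondegenerate_config /first_aff_indep l_dim => -[ln rk].
have [Wc Wfree] := row_free_completion (v := fun k => pt (p 0) k.+1 - pt (p 0) 0) rk.
pose w t k := if (k < l)%N then pt (p t) k.+1 - pt (p t) 0 else pt (fun i => row i Wc) k.
have w_an t0 : 0 <= t0 < delta -> forall k m, analytic_at (fun t => w t k 0 m) t0.
  move=> t0D k m; rewrite /w; case: ltnP => _; last exact: analytic_cst.
  by under eq_fun do rewrite !mxE; apply: analyticB; apply: pt_analytic p_an t0D.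
have res0 k : (k < d)%N -> gs_residual (w 0) k != 0.
  by apply: (gram_schmidt_residual_neq0 Wfree) => kk; rewrite rowK /w /pt valK.
have D0 : 0 <= (0 : R) < delta by rewrite lexx delta0.
have [e e0 res_near] := gram_schmidt_residual_near (fun k m _ => w_an 0 D0 k m) res0.
have in_eps t : 0 <= t < Num.min delta e ->
    0 <= t < delta /\ forall k, (k < d)%N -> gs_residual (w t) k != 0.
  rewrite lt_min => /and3P[t0 td te]; split; first by rewrite t0.
  by apply: res_near; rewrite subr0 ger0_norm.
exists (Num.min delta e); split; first by rewrite lt_min delta0 e0.
exists (fun t => gs_mx (w t)), (fun t => - (pt (p t) 0 *m (gs_mx (w t))^T)).
split; [|split; [|split]].
- by move=> t /in_eps[_ /gs_mx_orthogonal].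
- by move=> t0 /in_eps[t0D]; apply: gs_mx_analytic => k m _; apply: w_an.
- move=> t0 /in_eps[t0D res] i j; rewrite (ord1 i); under eq_fun do rewrite mxE.
  apply/analyticN/mulmx_tr_analytic => [m|]; first exact: pt_analytic p_an t0D.
  exact: gs_mx_analytic (fun k m _ => w_an t0 t0D k m) res.
- move=> t /in_eps[_ res]; apply: act_iso_pinned => i j il ij.
  by rewrite (_ : _ - _ = w t i) ?gs_mx_triangular // /w il.
Qed.
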